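(* Let $f$ be a function with $f\notin\mathscr{P}$ but $f^2\in\mathscr{P}$. Then by pinning some variables of $f$ to constants one obtains a function $h$ of rank 2 and essential arity 2 whose compressed function $\underline{h}$ is a binary function with $\underline{h}\notin\mathscr{P}$ and $\underline{h}^2\in\mathscr{P}$. Furthermore, all four values of $\underline{h}$ are nonzero.
   Context: Functions are maps $\{0,1\}^n\to\mathbb{C}$; $f^2$ is the pointwise square. $\mathscr{P}$: products of unary functions, binary equalities $[1,0,1]$ and binary disequalities $[0,1,0]$. Pinning a variable means fixing it to $0$ or $1$. If $h$ has affine support (an affine subspace of $\mathbb{Z}_2^n$) of dimension $r$ (the rank of $h$) with free variables $x_{j_1},\dots,x_{j_r}$, then every variable $x_k$ equals on $\mathrm{supp}(h)$ an affine function $\sum_t d_tx_{j_t}+e$ of the free variables; variables whose linear parts $\sum_t d_tx_{j_t}$ coincide (and are nonzero) form a bundle, and the essential arity is the number of nonempty bundles. The compressed function $\underline{h}(x_{j_1},\dots,x_{j_r})$ is the value of $h$ at the unique point of $\mathrm{supp}(h)$ with these free-variable values. *)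

From mathcomp Require Import all_boot all_order all_algebra.
From mathcomp Require Import complex.
From mathcomp Require Import reals.
Set Implicit Arguments. Unset Strict Implicit. Unset Printing Implicit Defensive.
Import Order.TTheory GRing.Theory Num.Theory.
Local Open Scope ring_scope.

Section Defs.
Variable R : realType.
Local Notation C := (R[i]).

Definition assign (n : nat) := {ffun 'I_n -> bool}.
Definition fn (n : nat) := assign n -> C.

Definition fsq n (f : fn n) : fn n := fun x => f x ^+ 2.

(* The class P: (a constant multiple of) a product of unary functions,
   binary equalities [1,0,1] and binary disequalities [0,1,0] applied to
   the variables of f. *)
Definition inP n (f : fn n) : Prop :=
  exists (lam : C) (U : seq ('I_n * (bool -> C)))
         (E : seq ('I_n * 'I_n)) (D : seq ('I_n * 'I_n)),
  forall x : assign n,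
    f x = lam * (\prod_(u <- U) u.2 (x u.1))
              * (\prod_(e <- E) ((x e.1 == x e.2)%:R : C))
              * (\prod_(d <- D) ((x d.1 != x d.2)%:R : C)).

(* h (of arity m) is obtained from f (of arity n) by pinning the variables
   outside the image of the injective map sigma to the constants c; the
   j-th variable of h is the variable sigma j of f. *)
Definition pinning n m (f : fn n) (h : fn m) : Prop :=
  exists (sigma : 'I_m -> 'I_n) (c : assign n),
    injective sigma /\
    forall y : assign m,
      h y = f [ffun i => if [pick j | sigma j == i] is Some j then y j else c i].

Definition supp m (h : fn m) : {set assign m} := [set x | h x != 0].

Definition axor m (x y : assign m) : assign m := [ffun i => x i (+) y i].
Definition azero m : assign m := [ffun _ => false].

Definition lin_subspace m (V : {set assign m}) : Prop :=
  azero m \in V /\ forall u v, u \in V -> v \in V -> axor u v \in V.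

Definition affine_subspace m (S : {set assign m}) : Prop :=
  exists (a : assign m) (V : {set assign m}),
    lin_subspace V /\ S = [set axor a v | v in V].

Definition affine_support m (h : fn m) : Prop := affine_subspace (supp h).

Definition lincomb m r (b : 'I_r -> assign m) (s : assign r) : assign m :=
  \big[@axor m / azero m]_(t < r | s t) b t.

Definition affine_dim m (S : {set assign m}) (r : nat) : Prop :=
  exists (a : assign m) (V : {set assign m}) (b : 'I_r -> assign m),
    lin_subspace V /\ S = [set axor a v | v in V] /\
    V = [set lincomb b s | s : assign r] /\ injective (lincomb b).

Definition rank m (h : fn m) (r : nat) : Prop :=
  affine_support h /\ affine_dim (supp h) r.

Definition free_vars m r (h : fn m) (j : 'I_r -> 'I_m) : Prop :=
  injective j /\
  forall y : assign r, exists! x : assign m,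
    x \in supp h /\ forall t, x (j t) = y t.

Definition linpart m r (h : fn m) (j : 'I_r -> 'I_m) (k : 'I_m)
  (d : assign r) : bool :=
  [exists e : bool, forall x in supp h,
     x k == (\big[xorb/false]_(t < r) (d t && x (j t))) (+) e].

(* essential arity: number of bundles = number of distinct nonzero linear
   parts occurring among the variables. *)
Definition ess_arity m r (h : fn m) (j : 'I_r -> 'I_m) : nat :=
  #|[set d : assign r | (d != azero r) && [exists k, linpart h j k d]]|.

Definition compressed m r (h : fn m) (j : 'I_r -> 'I_m) : fn r :=
  fun y => if [pick x in supp h | [forall t, x (j t) == y t]] is Some x
           then h x else 0.

End Defs.

(* Write f^2 = lam * (product of unary functions) * [equalities] * [disequalities].
   The support of f is cut out by the unary factors and by the (dis)equality
   constraints, so it is a product over the connected components of the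
   constraint graph, each component taking at most two values (a value and its
   flip).  If on every "square" w, w^C1, w^C2, w^(C1,C2) of the support spanned by
   two components we have f(w) f(w^(C1,C2)) = f(w^C1) f(w^C2), then f(x) is f(z)
   times a product of one ratio per component on which x differs from a fixed z,
   so f is in P.  Otherwise pick a square on which this fails; as f^2 is
   multiplicative along it, f(w) f(w^(C1,C2)) = - f(w^C1) f(w^C2).  Pinning every
   variable outside C1 and C2 to its value in w leaves a function supported
   exactly on this square, an affine plane whose two bundles are the variables of
   C1 and of C2; its compressed function g is nowhere zero with
   g(00) g(11) = - g(01) g(10), so g is not in P (where the sign would be +) but
   g^2 is. *)

From HB Require Import structures.
From mathcomp Require Import all_boot all_order all_algebra.
From mathcomp Require Import complex reals ring.
Import Order.TTheory GRing.Theory Num.Theory.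
Set Implicit Arguments. Unset Strict Implicit. Unset Printing Implicit Defensive.
Local Open Scope ring_scope.

Section Xor.
Variable m : nat.
Implicit Types x y z : assign m.

Lemma axorA : associative (@axor m).
Proof. by move=> x y z; apply/ffunP => i; rewrite !ffunE addbA. Qed.

Lemma axorC : commutative (@axor m).
Proof. by move=> x y; apply/ffunP => i; rewrite !ffunE addbC. Qed.

Lemma axor0x : left_id (azero m) (@axor m).
Proof. by move=> x; apply/ffunP => i; rewrite !ffunE. Qed.

Lemma axorxx x : axor x x = azero m.
Proof. by apply/ffunP => i; rewrite !ffunE addbb. Qed.

End Xor.

HB.instance Definition _ m :=
  Monoid.isComLaw.Build (assign m) (azero m) (@axor m) (@axorA m) (@axorC m) (@axor0x m).

Section Lincomb.
Variables m r : nat.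
Variable b : 'I_r -> assign m.

Lemma lincomb0 : lincomb b (azero r) = azero m.
Proof. by rewrite /lincomb big_pred0 // => t; rewrite ffunE. Qed.

Lemma lincombD s s' : lincomb b (axor s s') = axor (lincomb b s) (lincomb b s').
Proof.
rewrite /lincomb [LHS]big_mkcond [X in _ = axor X _]big_mkcond.
rewrite [X in _ = axor _ X]big_mkcond -big_split; apply: eq_bigr => t _ /=.
by rewrite ffunE; case: (s t); case: (s' t); rewrite /= ?axor0x ?axorxx // axorC axor0x.
Qed.

Lemma lin_subspace_lincomb : lin_subspace [set lincomb b s | s : assign r].
Proof.
split; first by apply/imsetP; exists (azero r); rewrite ?lincomb0.
move=> _ _ /imsetP [s _ ->] /imsetP [s' _ ->].
by apply/imsetP; exists (axor s s'); rewrite ?lincombD.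
Qed.

Lemma rank_lincomb (R : realType) (h : fn R m) a :
  injective (lincomb b) ->
  supp h = [set axor a v | v in [set lincomb b s | s : assign r]] -> rank h r.
Proof.
move=> inj_b supp_h; have lin_b := lin_subspace_lincomb.
split; first by exists a, [set lincomb b s | s : assign r].
by exists a, [set lincomb b s | s : assign r], b.
Qed.

End Lincomb.

Section Compressed.
Variables (R : realType) (m r : nat) (h : fn R m) (j : 'I_r -> 'I_m).
Hypothesis free_j : free_vars h j.

Lemma compressedE (y : assign r) (x : assign m) :
  x \in supp h -> (forall t, x (j t) = y t) -> compressed h j y = h x.
Proof.
move=> supp_x x_y; have [_ /(_ y) [x0 [_ x0_unique]]] := free_j.
rewrite /compressed; case: pickP => [x' /andP [supp_x' /forallP x'_y] | none].
  by rewrite -(x0_unique x') ?(x0_unique x) //; split=> // t; apply/eqP.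
by have /andP [] := none x; split=> //; apply/forallP => t; rewrite x_y.
Qed.

Lemma compressed_neq0 (y : assign r) : compressed h j y != 0.
Proof.
have [_ /(_ y) [x [[supp_x x_y] _]]] := free_j.
by rewrite (compressedE supp_x x_y); rewrite inE in supp_x.
Qed.

End Compressed.

Lemma ord2_cases (t : 'I_2) : t = ord0 \/ t = ord_max.
Proof. by case: t => [[|[|//]] lt_t2]; [left | right]; apply: val_inj. Qed.

Definition assign2 (a b : bool) : assign 2 := [ffun t => if t == ord0 then a else b].

Lemma assign2_ord0 a b : assign2 a b ord0 = a.
Proof. by rewrite ffunE. Qed.

Lemma assign2_ordmax a b : assign2 a b ord_max = b.
Proof. by rewrite ffunE. Qed.

Lemma assign2_eta (y : assign 2) : y = assign2 (y ord0) (y ord_max).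
Proof. by apply/ffunP => t; rewrite ffunE; case: (ord2_cases t) => ->. Qed.

Lemma eq_assign2 a b a' b' : (assign2 a b == assign2 a' b') = (a == a') && (b == b').
Proof.
apply/eqP/andP => [eq_ab | [/eqP -> /eqP ->] //].
have := congr1 (fun y : assign 2 => y ord0) eq_ab.
have := congr1 (fun y : assign 2 => y ord_max) eq_ab.
by rewrite !ffunE /= => -> ->.
Qed.

Lemma bigxor2 (F : 'I_2 -> bool) : \big[xorb/false]_(t < 2) F t = F ord0 (+) F ord_max.
Proof.
rewrite big_ord_recl big_ord_recl big_ord0.
have -> : lift ord0 ord0 = ord_max :> 'I_2 by apply: val_inj.
by case: (F ord0); case: (F ord_max).
Qed.

Lemma lincomb2 m (b : 'I_2 -> assign m) (s : assign 2) k :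
  lincomb b s k = (s ord0 && b ord0 k) (+) (s ord_max && b ord_max k).
Proof.
rewrite /lincomb big_mkcond big_ord_recl big_ord_recl big_ord0.
have -> : lift ord0 ord0 = ord_max :> 'I_2 by apply: val_inj.
by case: (s ord0); case: (s ord_max); rewrite /= !ffunE ?addbF.
Qed.

Lemma prodr_natr_all (K : pzSemiRingType) T (s : seq T) (P : pred T) :
  \prod_(t <- s) ((P t)%:R : K) = (all P s)%:R.
Proof.
elim: s => [|t s IHs]; first by rewrite big_nil.
by rewrite big_cons IHs /=; case: (P t); rewrite ?mul1r ?mul0r.
Qed.

Section BinaryP.
Variables (R : realType) (g : fn R 2).
Hypothesis g_neq0 : forall y, g y != 0.
Local Notation g_ a b := (g (assign2 a b)).

Lemma inP_cross : inP g -> g_ false false * g_ true true = g_ false true * g_ true false.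
Proof.
move=> [lam [U [E [D gE]]]].
have {}gE y : g y = lam * \prod_(u <- U) u.2 (y u.1).
  have := g_neq0 y; rewrite gE !prodr_natr_all.
  by case: (all _ E); case: (all _ D); rewrite ?mulr1 ?mulr0 ?eqxx.
rewrite !gE mulrACA [RHS]mulrACA -!big_split; congr (_ * _); apply: eq_bigr => u _.
by case: (ord2_cases u.1) => ->; rewrite !ffunE //= mulrC.
Qed.

Definition anticross := g_ false false * g_ true true = - (g_ false true * g_ true false).

Hypothesis g_anticross : anticross.

Lemma anticross_not_inP : ~ inP g.
Proof.
move=> /inP_cross g_cross; move: g_anticross; rewrite /anticross g_cross => /eqP.
by rewrite -subr_eq0 opprK -mulr2n mulrn_eq0 /= mulf_eq0 (negbTE (g_neq0 _)) (negbTE (g_neq0 _)).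
Qed.

Lemma anticross_fsq_inP : inP (fsq g).
Proof.
pose c b := if b then g_ true false ^+ 2 / g_ false false ^+ 2 else 1.
pose c' b := if b then g_ false true ^+ 2 / g_ false false ^+ 2 else 1.
exists (g_ false false ^+ 2), [:: (ord0, c); (ord_max, c')], [::], [::] => y.
have g00_neq0 : g_ false false ^+ 2 != 0 by rewrite expf_neq0.
have g11E : g_ true true ^+ 2 = g_ true false ^+ 2 * g_ false true ^+ 2 / g_ false false ^+ 2.
  apply: (mulfI g00_neq0); rewrite -exprMn g_anticross sqrrN !exprMn.
  by rewrite [RHS]mulrC divfK // mulrC.
rewrite /fsq (assign2_eta y) !big_cons !big_nil /= !assign2_ord0 !assign2_ordmax /c /c'.
case: (y ord0); case: (y ord_max); rewrite ?g11E !(mulr1, mul1r) //; field.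
all: exact: g_neq0.
Qed.

End BinaryP.

Section SquareInP.
Variables (R : realType) (n : nat) (f : fn R n) (lam : R[i]).
Variables (U : seq ('I_n * (bool -> R[i]))) (E D : seq ('I_n * 'I_n)).
Implicit Types (x y z : assign n) (A : {set 'I_n}).

Definition uprod x : R[i] := \prod_(u <- U) u.2 (x u.1).

Definition sat x :=
  all (fun p : 'I_n * 'I_n => x p.1 == x p.2) E &&
  all (fun p : 'I_n * 'I_n => x p.1 != x p.2) D.

Hypothesis f_sq : forall x, fsq f x =
  lam * uprod x * \prod_(p <- E) (x p.1 == x p.2)%:R * \prod_(p <- D) (x p.1 != x p.2)%:R.

Lemma f_neq0E x : (f x != 0) = [&& lam != 0, uprod x != 0 & sat x].
Proof.
rewrite -sqrf_eq0 -/(fsq f x) f_sq !prodr_natr_all /sat.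
case: (all _ E); case: (all _ D); rewrite ?mulr1 ?mulr0 ?eqxx ?andbF //.
by rewrite mulf_eq0 negb_or !andbT.
Qed.

Lemma f_sat x : f x != 0 -> sat x.
Proof. by rewrite f_neq0E => /and3P []. Qed.

Lemma sqr_f_supp x : f x != 0 -> f x ^+ 2 = lam * uprod x.
Proof.
move=> fx; have /andP [xE xD] := f_sat fx.
by have := f_sq x; rewrite !prodr_natr_all xE xD !mulr1.
Qed.

Lemma uprod_neq0E x : (uprod x != 0) = all (fun u => u.2 (x u.1) != 0) U.
Proof. exact: prodf_seq_neq0. Qed.

Lemma f_neq0_mix x z y : f x != 0 -> f z != 0 -> sat y ->
  (forall i, y i = x i \/ y i = z i) -> f y != 0.
Proof.
rewrite !f_neq0E !uprod_neq0E => /and3P [lam_neq0 x_ok _] /and3P [_ z_ok _].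
move=> y_sat y_mix; apply/and3P; split=> //.
move: (introT andP (conj x_ok z_ok)); rewrite -all_predI; apply: sub_all => u /andP [].
by case: (y_mix u.1) => ->.
Qed.

Definition linked : rel 'I_n :=
  fun i k => has (fun p => (p == (i, k)) || (p == (k, i))) (E ++ D).

Lemma linked_sym : symmetric linked.
Proof. by move=> i k; apply: eq_has => p; rewrite orbC. Qed.

Let linked_csym := sym_connect_sym linked_sym.

Lemma linked_mem p : p \in E ++ D -> linked p.1 p.2.
Proof. by move=> p_in; apply/hasP; exists p; rewrite // -surjective_pairing eqxx. Qed.

Definition component r : {set 'I_n} := [set k | connect linked r k].

Lemma component_closed r : closed linked (component r).
Proof. by move=> i k /(connect_closed linked_csym r); rewrite !inE. Qed.

Lemma closed_diff x y : sat x -> sat y -> closed linked [set i | x i != y i].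
Proof.
move=> /andP [xE xD] /andP [yE yD] i k /hasP [[a b] ab_in ab_ik].
have diff_ab : (x a != y a) = (x b != y b).
  move: ab_in; rewrite mem_cat => /orP [] ab_in.
  - by move: (allP xE _ ab_in) (allP yE _ ab_in) => /= /eqP -> /eqP ->.
  - move: (allP xD _ ab_in) (allP yD _ ab_in) => /=.
    by case: (x a); case: (x b); case: (y a); case: (y b).
by rewrite !inE; case/orP: ab_ik => /eqP [<- <-].
Qed.

Definition flip x A : assign n := [ffun i => x i (+) (i \in A)].

Lemma flipK A : involutive (flip^~ A).
Proof. by move=> x; apply/ffunP => i; rewrite !ffunE -addbA addbb addbF. Qed.

Lemma flipC x A B : flip (flip x A) B = flip (flip x B) A.
Proof. by apply/ffunP => i; rewrite !ffunE -!addbA (addbC (i \in A)). Qed.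

Lemma flip0 x : flip x set0 = x.
Proof. by apply/ffunP => i; rewrite ffunE inE addbF. Qed.

Lemma sat_flip x A : closed linked A -> sat (flip x A) = sat x.
Proof.
move=> A_closed; congr andb; apply: eq_in_all => p p_in;
  rewrite !ffunE (A_closed p.1 p.2 (linked_mem _)) ?mem_cat ?p_in ?orbT //;
  by case: (_ \in A); case: (x p.1); case: (x p.2).
Qed.

Local Notation croot := (fingraph.root linked).

Lemma roots_unconnected r s : croot r = r -> croot s = s -> r != s -> ~~ connect linked r s.
Proof. by move=> r_root s_root; rewrite -(root_connect linked_csym) r_root s_root. Qed.

Definition square_in_supp w r1 r2 :=
  [&& f w != 0, ~~ connect linked r1 r2,
      f (flip w (component r1)) != 0 & f (flip w (component r2)) != 0].

Definition square_mult w r1 r2 :=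
  f w * f (flip (flip w (component r1)) (component r2)) ==
  f (flip w (component r1)) * f (flip w (component r2)).

Section Factorization.
Variable z : assign n.
Hypothesis fz_neq0 : f z != 0.

Definition diff_roots x : {set 'I_n} := [set r | (croot r == r) && (x r != z r)].

Definition ratio r := f (flip z (component r)) / f z.

Lemma diff_roots_root x r : r \in diff_roots x -> croot r = r.
Proof. by rewrite inE => /andP [/eqP]. Qed.

Lemma diff_at_root x i : f x != 0 -> (x i != z i) = (x (croot i) != z (croot i)).
Proof.
move=> fx; have := connect_root linked i.
by move/(closed_connect (closed_diff (f_sat fx) (f_sat fz_neq0))); rewrite !inE.
Qed.

Lemma diff_roots0 x : f x != 0 -> diff_roots x = set0 -> x = z.
Proof.
move=> fx x_z; apply/ffunP => i; apply/eqP/negPn/negP => xi.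
have : croot i \in diff_roots x by rewrite inE root_root // eqxx -diff_at_root.
by rewrite x_z inE.
Qed.

Lemma diff_roots_flip x r :
  r \in diff_roots x -> diff_roots (flip x (component r)) = diff_roots x :\ r.
Proof.
move=> r_in; have r_root := diff_roots_root r_in; move: r_in; rewrite inE => /andP [_ xr].
apply/setP => s; rewrite !inE ffunE inE; case s_root: (croot s == s); last by rewrite andbF.
rewrite -(root_connect linked_csym) r_root (eqP s_root) /=.
case: (eqVneq r s) => [<- | _] /=; last by rewrite addbF.
by case: (x r) (z r) xr => [] [].
Qed.

Lemma diff_roots_flip_card x r :
  r \in diff_roots x -> (#|diff_roots (flip x (component r))| < #|diff_roots x|)%N.
Proof. by move=> r_in; rewrite diff_roots_flip // (cardsD1 r (diff_roots x)) r_in. Qed.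

Lemma f_flip_neq0 x r : f x != 0 -> r \in diff_roots x -> f (flip x (component r)) != 0.
Proof.
move=> fx r_in; apply: (f_neq0_mix fx fz_neq0).
  by rewrite sat_flip; [exact: f_sat | exact: component_closed].
move=> i; rewrite ffunE inE; case: (boolP (connect linked r i)) => ri; last by left; rewrite addbF.
have i_root : croot i = r.
  by rewrite -(diff_roots_root r_in); apply/eqP; rewrite (root_connect linked_csym) linked_csym.
move: r_in; rewrite inE => /andP [_ xr]; right.
by move: (diff_at_root i fx); rewrite i_root xr; case: (x i); case: (z i).
Qed.

Hypothesis squares_mult : forall w r1 r2, square_in_supp w r1 r2 -> square_mult w r1 r2.

Lemma f_flip_ratio x r :
  f x != 0 -> r \in diff_roots x -> f x = f (flip x (component r)) * ratio r.
Proof.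
have [k] := ubnP #|diff_roots x|; elim: k x => // k IHk x lt_k fx r_in.
have [only_r | [s]] := set_0Vmem (diff_roots x :\ r).
  have xr_z : flip x (component r) = z.
    by apply: diff_roots0; rewrite ?diff_roots_flip ?f_flip_neq0.
  by rewrite -{1}[x](flipK (component r)) xr_z /ratio mulrC divfK.
rewrite in_setD1 => /andP [s_r s_in].
(* Flip a second differing component s first: the square spanned by r and s at
   w relates f x to f xs, on which r still differs and induction applies. *)
pose xs := flip x (component s); pose w := flip xs (component r).
have r_in_xs : r \in diff_roots xs by rewrite diff_roots_flip // in_setD1 eq_sym s_r.
have fxs : f xs != 0 by apply: f_flip_neq0.
have fw : f w != 0 by apply: f_flip_neq0.
have lt_xs : (#|diff_roots xs| < k)%N.
  exact: leq_trans (diff_roots_flip_card s_in) lt_k.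
have w_r : flip w (component r) = xs by rewrite flipK.
have w_s : flip w (component s) = flip x (component r) by rewrite flipC flipK.
have sq_supp : square_in_supp w r s.
  apply/and4P; split; rewrite ?w_r ?w_s ?f_flip_neq0 //.
  by rewrite roots_unconnected 1?eq_sym ?(diff_roots_root r_in) ?(diff_roots_root s_in).
have /eqP := squares_mult sq_supp; rewrite /square_mult w_r w_s flipK => sq.
by apply: (mulfI fw); rewrite sq (IHk xs) //; ring.
Qed.

Lemma f_factor x : f x != 0 -> f x = f z * \prod_(r in diff_roots x) ratio r.
Proof.
have [k] := ubnP #|diff_roots x|; elim: k x => // k IHk x lt_k fx.
have [x_z | [r r_in]] := set_0Vmem (diff_roots x).
  by rewrite x_z big_set0 mulr1 (diff_roots0 fx x_z).
rewrite (f_flip_ratio fx r_in) (big_setD1 r r_in) -diff_roots_flip // IHk ?f_flip_neq0 //.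
  by rewrite /=; ring.
exact: leq_trans (diff_roots_flip_card r_in) lt_k.
Qed.

Lemma inP_of_squares_mult : inP f.
Proof.
pose phi i b := if (croot i == i) && (b != z i) then ratio i else 1.
exists (f z), ([seq (i, phi i) | i <- index_enum 'I_n] ++
  [seq (u.1, fun b => (u.2 b != 0)%:R) | u <- U]), E, D => x.
rewrite big_cat !big_map /= !prodr_natr_all.
have -> : \prod_(i <- index_enum 'I_n) phi i (x i) = \prod_(r in diff_roots x) ratio r.
  by rewrite [RHS]big_mkcond; apply: eq_bigr => i _; rewrite inE.
have lam_neq0 : lam != 0 by move: fz_neq0; rewrite f_neq0E => /and3P [].
have := f_neq0E x; rewrite lam_neq0 uprod_neq0E /sat /=.
case: (boolP (f x != 0)) => [fx | /negPn/eqP ->]; last first.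
  by case: (all _ U); case: (all _ E); case: (all _ D); rewrite //= ?mulr0 ?mul0r.
by rewrite {1}(f_factor fx) => /esym/and3P [-> -> ->]; rewrite !mulr1.
Qed.

End Factorization.

Lemma exists_nonmult_square :
  ~ inP f -> exists w r1 r2, square_in_supp w r1 r2 && ~~ square_mult w r1 r2.
Proof.
move=> f_notP; have [z fz | f0] := pickP (fun z => f z != 0); last first.
  by case: f_notP; exists 0, [::], [::], [::] => x; rewrite (eqP (negbFE (f0 x))) !mul0r.
case: (boolP [exists w, exists r1, exists r2, square_in_supp w r1 r2 && ~~ square_mult w r1 r2]).
  by case/existsP => w /existsP [r1 /existsP [r2 sq]]; exists w, r1, r2.
rewrite negb_exists => /forallP no_sq; case: f_notP.
apply: (inP_of_squares_mult fz) => w r1 r2 sq_supp; apply/negPn.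
move: (no_sq w); rewrite negb_exists => /forallP/(_ r1).
by rewrite negb_exists => /forallP/(_ r2); rewrite sq_supp.
Qed.

Section PinnedSquare.
Variables (w : assign n) (r1 r2 : 'I_n).
Hypothesis sq_supp : square_in_supp w r1 r2.
Local Notation C1 := (component r1).
Local Notation C2 := (component r2).

Let fw : f w != 0. Proof. by case/and4P: sq_supp. Qed.
Let r12_unconnected : ~~ connect linked r1 r2. Proof. by case/and4P: sq_supp. Qed.
Let fw1 : f (flip w C1) != 0. Proof. by case/and4P: sq_supp. Qed.
Let fw2 : f (flip w C2) != 0. Proof. by case/and4P: sq_supp. Qed.

Lemma r1_in_C1 : r1 \in C1. Proof. by rewrite inE connect0. Qed.
Lemma r2_in_C2 : r2 \in C2. Proof. by rewrite inE connect0. Qed.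

Lemma components_disjoint i : i \in C1 -> i \in C2 -> False.
Proof.
rewrite !inE => r1i r2i; case/negP: r12_unconnected.
by apply: connect_trans r1i _; rewrite linked_csym.
Qed.

Definition face a b : assign n := flip (flip w (if a then C1 else set0)) (if b then C2 else set0).

Lemma faceE a b i : face a b i = w i (+) (a && (i \in C1)) (+) (b && (i \in C2)).
Proof. by rewrite !ffunE; case: a; case: b; rewrite ?inE. Qed.

Lemma face_neq0 a b : f (face a b) != 0.
Proof.
apply: (f_neq0_mix fw1 fw2).
  have set0_closed : closed linked (set0 : {set 'I_n}) by move=> i k _; rewrite !inE.
  by rewrite !sat_flip ?(f_sat fw) //; case: ifP => _ //; apply: component_closed.
move=> i; rewrite faceE !ffunE; case C1i: (i \in C1); case C2i: (i \in C2).
- by case: (components_disjoint C1i C2i).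
all: by case: a; case: b; rewrite /= ?addbF; first [by left | by right].
Qed.

Lemma face_sqr_cross :
  (f (face false false) * f (face true true)) ^+ 2 =
  (f (face false true) * f (face true false)) ^+ 2.
Proof.
rewrite !exprMn !sqr_f_supp ?face_neq0 // mulrACA [RHS]mulrACA; congr (_ * _).
rewrite /uprod -!big_split; apply: eq_bigr => u _; rewrite !faceE.
case C1u: (u.1 \in C1); case C2u: (u.1 \in C2); rewrite /= ?addbF //.
- by case: (components_disjoint C1u C2u).
- exact: mulrC.
Qed.

Hypothesis sq_nonmult : ~~ square_mult w r1 r2.

Lemma face_anticross (a b : bool) :
  f (face a b) * f (face (~~ a) (~~ b)) = - (f (face a (~~ b)) * f (face (~~ a) b)).
Proof.
have : f (face false false) * f (face true true) = - (f (face false true) * f (face true false)).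
  move/eqP: face_sqr_cross; rewrite eqf_sqr => /orP [/eqP sq_mult | /eqP //].
  case/negP: sq_nonmult; rewrite /square_mult; move: sq_mult; rewrite /face /= !flip0 => ->.
  by rewrite [X in _ == X]mulrC.
case: a; case: b => /= anti.
- by rewrite mulrC anti mulrC.
- by rewrite [in RHS]mulrC anti opprK mulrC.
- by rewrite anti opprK.
- exact: anti.
Qed.

Definition unpinned : {set 'I_n} := C1 :|: C2.
Definition pinned_arity := #|unpinned|.
Definition var (j : 'I_pinned_arity) : 'I_n := enum_val j.

Implicit Types v : assign pinned_arity.

Definition extend v : assign n :=
  [ffun i => if [pick j | var j == i] is Some j then v j else w i].

Definition pinned : fn R pinned_arity := fun v => f (extend v).

Lemma var_inj : injective var. Proof. exact: enum_val_inj. Qed.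

Lemma pinning_pinned : pinning f pinned.
Proof. by exists var, w; split; [exact: var_inj |]. Qed.

Lemma var_unpinned j : (var j \in C1) || (var j \in C2).
Proof. by rewrite -in_setU enum_valP. Qed.

Lemma var_onto i : (i \in C1) || (i \in C2) -> exists j, var j = i.
Proof. by rewrite -in_setU => i_in; exists (enum_rank_in i_in i); rewrite /var enum_rankK_in. Qed.

Lemma extend_var v j : extend v (var j) = v j.
Proof. by rewrite ffunE; case: pickP => [j' /eqP/var_inj -> | /(_ j)] //; rewrite eqxx. Qed.

Definition pt a b : assign pinned_arity := [ffun j => face a b (var j)].

Lemma extend_pt a b : extend (pt a b) = face a b.
Proof.
apply/ffunP => i; case: (boolP ((i \in C1) || (i \in C2))) => [/var_onto [j <-] | i_out].
  by rewrite extend_var ffunE.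
rewrite faceE ffunE; case: pickP => [j /eqP var_j | _]; last first.
  by move: i_out; case: (i \in C1); case: (i \in C2); rewrite ?andbF ?addbF.
by move: i_out; rewrite -var_j var_unpinned.
Qed.

Lemma var_C2 k : (var k \in C2) = (var k \notin C1).
Proof.
case: (boolP (var k \in C1)) => [C1k | C1'k].
  by apply/negP => /(components_disjoint C1k).
by move: (var_unpinned k); rewrite (negbTE C1'k).
Qed.

Lemma ptE a b k : pt a b k = w (var k) (+) (if var k \in C1 then a else b).
Proof. by rewrite ffunE faceE var_C2; case: (var k \in C1); rewrite ?andbT ?andbF ?addbF. Qed.

Lemma face_r1 a b : face a b r1 = w r1 (+) a.
Proof.
have /negbTE r1_C2 : r1 \notin C2 by apply/negP/components_disjoint/r1_in_C1.
by rewrite faceE r1_in_C1 r1_C2 andbT andbF addbF.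
Qed.

Lemma face_r2 a b : face a b r2 = w r2 (+) b.
Proof.
have /negbTE r2_C1 : r2 \notin C1 by apply/negP => /components_disjoint; apply; apply: r2_in_C2.
by rewrite faceE r2_in_C2 r2_C1 andbT andbF addbF.
Qed.

Lemma pt_inj a b a' b' : pt a b = pt a' b' -> a = a' /\ b = b'.
Proof.
move/(congr1 extend); rewrite !extend_pt => eq_face.
by move: (congr1 (fun x => x r1) eq_face) (congr1 (fun x => x r2) eq_face) => /=;
  rewrite !face_r1 !face_r2 => /addbI -> /addbI ->.
Qed.

Lemma pt_in_supp a b : pt a b \in supp pinned.
Proof. by rewrite inE /pinned extend_pt face_neq0. Qed.

Lemma supp_pinnedP v : v \in supp pinned -> exists a b, v = pt a b.
Proof.
rewrite inE => fv; have diff_closed := closed_diff (f_sat fv) (f_sat fw).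
have diffE r i : i \in component r -> (extend v r != w r) = (extend v i != w i).
  by rewrite inE => /(closed_connect diff_closed); rewrite !inE.
exists (extend v r1 != w r1), (extend v r2 != w r2); apply/ffunP => k.
rewrite ptE -extend_var; case: ifP => [/diffE -> | C1'k].
  by case: (extend v _) (w _) => [] [].
have C2k : var k \in C2 by move: (var_unpinned k); rewrite C1'k.
by rewrite (diffE _ _ C2k); case: (extend v _) (w _) => [] [].
Qed.

Definition basis (t : 'I_2) : assign pinned_arity :=
  [ffun k => var k \in if t == ord0 then C1 else C2].

Lemma pt_lincomb s : axor (pt false false) (lincomb basis s) = pt (s ord0) (s ord_max).
Proof.
apply/ffunP => k; rewrite ffunE lincomb2 !ptE !ffunE var_C2 /=.
by case: (var k \in C1); case: (s ord0); case: (s ord_max); case: (w (var k)).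
Qed.

Lemma lincomb_basis_inj : injective (lincomb basis).
Proof.
move=> s s' /(congr1 (axor (pt false false))); rewrite !pt_lincomb => /pt_inj [e0 e1].
by rewrite (assign2_eta s) (assign2_eta s') e0 e1.
Qed.

Lemma supp_pinned_affine :
  supp pinned = [set axor (pt false false) v | v in [set lincomb basis s | s : assign 2]].
Proof.
apply/setP => v; apply/idP/imsetP => [/supp_pinnedP [a [b ->]] | [_ /imsetP [s _ ->] ->]].
  exists (lincomb basis (assign2 a b)); first by apply/imsetP; exists (assign2 a b).
  by rewrite pt_lincomb assign2_ord0 assign2_ordmax.
by rewrite pt_lincomb pt_in_supp.
Qed.

Lemma rank_pinned : rank pinned 2.
Proof. exact: rank_lincomb lincomb_basis_inj supp_pinned_affine. Qed.

Lemma free_vars_pinned_exist : exists j : 'I_2 -> 'I_pinned_arity, free_vars pinned j.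
Proof.
have [j1 var_j1] : exists j, var j = r1 by apply: var_onto; rewrite r1_in_C1.
have [j2 var_j2] : exists j, var j = r2 by apply: var_onto; rewrite r2_in_C2 orbT.
have pt_j1 a b : pt a b j1 = w r1 (+) a by rewrite ffunE var_j1 face_r1.
have pt_j2 a b : pt a b j2 = w r2 (+) b by rewrite ffunE var_j2 face_r2.
have /negbTE j12 : j1 != j2.
  by apply/eqP => j12; apply: (components_disjoint r1_in_C1); rewrite -var_j1 j12 var_j2 r2_in_C2.
exists (fun t => if t == ord0 then j1 else j2); split=> [t t' | y].
  by case: (ord2_cases t) => ->; case: (ord2_cases t') => -> //= eq_j;
    move: j12; rewrite eq_j eqxx.
exists (pt (w r1 (+) y ord0) (w r2 (+) y ord_max)); split.
  split=> [|t]; first exact: pt_in_supp.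
  by case: (ord2_cases t) => ->; rewrite /= ?pt_j1 ?pt_j2 addKb.
move=> _ [/supp_pinnedP [a [b ->]] pt_y].
by move: (pt_y ord0) (pt_y ord_max); rewrite /= pt_j1 pt_j2 => <- <-; rewrite !addKb.
Qed.

Section FreeVars.
Variable j : 'I_2 -> 'I_pinned_arity.
Hypothesis free_j : free_vars pinned j.

Lemma free_vars_split : (var (j ord_max) \in C1) = (var (j ord0) \notin C1).
Proof.
have [_ /(_ (assign2 (w (var (j ord0))) (~~ w (var (j ord_max)))))] := free_j.
case=> _ [[/supp_pinnedP [a [b ->]] pt_j] _].
move: (pt_j ord0) (pt_j ord_max) => {pt_j}; rewrite !ptE assign2_ord0 assign2_ordmax.
by case: (_ \in C1); case: (_ \in C1); case: a; case: b; case: (w _); case: (w _).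
Qed.

Lemma compressed_pinnedE c d : compressed pinned j (assign2 c d) =
  if var (j ord0) \in C1 then f (face (w (var (j ord0)) (+) c) (w (var (j ord_max)) (+) d))
  else f (face (w (var (j ord_max)) (+) d) (w (var (j ord0)) (+) c)).
Proof.
have split_j := free_vars_split; case: ifP split_j => C1j0 split_j;
  rewrite -extend_pt; apply: (compressedE free_j (pt_in_supp _ _)) => t;
  by case: (ord2_cases t) => ->; rewrite ptE ?C1j0 ?split_j ?assign2_ord0 ?assign2_ordmax addKb.
Qed.

Lemma compressed_pinned_anticross : anticross (compressed pinned j).
Proof.
rewrite /anticross !compressed_pinnedE; case: ifP => _; rewrite !addbF !addbT.
  exact: face_anticross.
by rewrite face_anticross mulrC.
Qed.

Lemma linpart_pinnedE k d : linpart pinned j k d =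
  (d == if (var k \in C1) == (var (j ord0) \in C1)
        then assign2 true false else assign2 false true).
Proof.
have split_j := free_vars_split.
apply/existsP/idP => [[e /forallP lin_k] | d_eq].
  have lin_pt a b := implyP (lin_k (pt a b)) (pt_in_supp a b).
  move: (lin_pt false false) (lin_pt true false) (lin_pt false true) => {lin_k lin_pt}.
  rewrite (fun_if (eq_op d)) (assign2_eta d) !eq_assign2 !bigxor2 !assign2_ord0 !assign2_ordmax.
  rewrite !ptE split_j; case: (d ord0); case: (d ord_max); case: (_ \in C1); case: (_ \in C1);
  by case: e; case: (w (var k)); case: (w (var (j ord0))); case: (w (var (j ord_max))).
exists (w (var k) (+) if (var k \in C1) == (var (j ord0) \in C1)
                       then w (var (j ord0)) else w (var (j ord_max))).
apply/forallP => x; apply/implyP => /supp_pinnedP [a [b ->]].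
rewrite (eqP d_eq) bigxor2 !ptE split_j.
case: (_ \in C1); case: (_ \in C1); rewrite /= ?assign2_ord0 ?assign2_ordmax; case: a; case: b;
by case: (w (var k)); case: (w (var (j ord0))); case: (w (var (j ord_max))).
Qed.

Lemma ess_arity_pinned : ess_arity pinned j = 2%N.
Proof.
rewrite /ess_arity (_ : [set d | _] = [set assign2 true false; assign2 false true]).
  by rewrite cards2 eq_assign2.
apply/setP => d; rewrite !inE; apply/andP/orP => [[_ /existsP [k]] | d_eq].
  by rewrite linpart_pinnedE => /eqP ->; case: ifP; [left | right].
split; first by case: d_eq => /eqP ->; rewrite (assign2_eta (azero 2)) eq_assign2 !ffunE.
apply/existsP; case: d_eq => /eqP ->.
  by exists (j ord0); rewrite linpart_pinnedE eqxx.
by exists (j ord_max); rewrite linpart_pinnedE free_vars_split; case: (_ \in C1).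
Qed.

End FreeVars.

End PinnedSquare.

End SquareInP.

Theorem lemma4p14 (R : realType) (n : nat) (f : fn R n) :
  ~ inP f -> inP (fsq f) ->
  exists (m : nat) (h : fn R m),
    pinning f h /\ rank h 2 /\
    (exists j : 'I_2 -> 'I_m, free_vars h j) /\
    forall j : 'I_2 -> 'I_m, free_vars h j ->
      [/\ ess_arity h j = 2%N,
          ~ inP (compressed h j),
          inP (fsq (compressed h j)) &
          forall y, compressed h j y != 0].
Proof.
move=> f_notP [lam [U [E [D f_sq]]]].
have [w [r1 [r2 /andP [sq_supp sq_nonmult]]]] := exists_nonmult_square f_sq f_notP.
exists _, (@pinned _ _ f E D w r1 r2); split; [|split; [|split]].
- exact: pinning_pinned.
- exact: (rank_pinned f_sq sq_supp).
- exact: (free_vars_pinned_exist f_sq sq_supp).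
- move=> j free_j; have g_neq0 := compressed_neq0 free_j.
  have g_anti := compressed_pinned_anticross f_sq sq_supp sq_nonmult free_j.
  split; [exact: (ess_arity_pinned f_sq sq_supp free_j) | | | exact: g_neq0].
  + exact: (anticross_not_inP g_neq0 g_anti).
  + exact: (anticross_fsq_inP g_neq0 g_anti).
Qed.
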